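(* Let $l\ge 1$ and $0\le k\le l-1$. The $(k+1)$-qubit gate $C^kZ^{2^{k-l+1}}$ can be implemented exactly by a circuit consisting of CNOT gates and a single layer (i.e. gates acting in parallel on distinct qubits) of the single-qubit gates $Z^{2^{1-l}}$ and $(Z^{2^{1-l}})^{-1}$, using additional ancilla qubits initialized to $|0\rangle$ and returned to $|0\rangle$.
   Context: $C^kZ^{2^{k-l+1}}$ is the diagonal gate on $k+1$ qubits acting as the identity on all computational basis states except $|1^{k+1}\rangle$, which it multiplies by the phase $e^{i\pi 2^{1+k-l}}$. The single-qubit gate $Z^{2^{1-l}}=|0\rangle\langle0|+e^{i\pi 2^{1-l}}|1\rangle\langle1|$. *)

From HB Require Import structures.
From mathcomp Require Import all_boot all_order all_algebra.
From mathcomp Require Import reals trigo.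
From mathcomp Require Import complex.
Set Implicit Arguments. Unset Strict Implicit. Unset Printing Implicit Defensive.
Import Order.TTheory GRing.Theory Num.Theory.
Local Open Scope ring_scope.

Section Qcirc.
Variable R : realType.
Local Notation C := (R[i]).

Definition expi (t : R) : C := Complex (cos t) (sin t).

Definition basis (n : nat) := {ffun 'I_n -> bool}.

(* an operator on n qubits, given by its matrix entries  <y| U |x>  *)
Definition op (n : nat) := basis n -> basis n -> C.

Definition op_comp n (A B : op n) : op n :=
  fun y x => \sum_(z : basis n) A y z * B z x.

Definition op_id n : op n := fun y x => (y == x)%:R.

(* run a gate sequence: the first gate of the list is applied first *)
Definition seq_op n (s : seq (op n)) : op n :=
  foldr (fun g acc => op_comp acc g) (@op_id n) s.

Definition flip n (t : 'I_n) (x : basis n) : basis n :=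
  [ffun i => if i == t then ~~ x i else x i].

Definition cnot_op n (c t : 'I_n) : op n :=
  fun y x => (y == if x c then flip t x else x)%:R.

Definition phase_op n (q : 'I_n) (a : C) : op n :=
  fun y x => (y == x)%:R * (if x q then a else 1).

(* Z^{2^{1-l}} = |0><0| + e^{i pi 2^{1-l}} |1><1| ; its inverse has phase
   e^{-i pi 2^{1-l}} *)
Definition zl_phase (l : nat) : R := pi * (2 / 2 ^+ l).
Definition layer_gate n (l : nat) (g : 'I_n * bool) : op n :=
  phase_op g.1 (expi (if g.2 then - zl_phase l else zl_phase l)).

(* C^k Z^{2^{k-l+1}} on k+1 qubits: phase e^{i pi 2^{1+k-l}} on |1^{k+1}> *)
Definition ckz_op (k l : nat) : op k.+1 :=
  fun y x => (y == x)%:R *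
    (if [forall i, x i] then expi (pi * (2 ^+ k.+1 / 2 ^+ l)) else 1).

(* the circuit: CNOTs, then one layer of Z^{2^{1-l}} / (Z^{2^{1-l}})^{-1}
   gates on pairwise distinct qubits (bool = true means the inverse), then CNOTs *)
Definition circuit_op n (l : nat) (pre : seq ('I_n * 'I_n))
    (layer : seq ('I_n * bool)) (post : seq ('I_n * 'I_n)) : op n :=
  seq_op ([seq cnot_op p.1 p.2 | p <- pre] ++ [seq layer_gate l g | g <- layer]
          ++ [seq cnot_op p.1 p.2 | p <- post]).

Definition wf_cnots n (s : seq ('I_n * 'I_n)) : bool := all (fun p => p.1 != p.2) s.

(* data qubits are the first d, ancillas the last m *)
Definition join d m (x : basis d) (a : basis m) : basis (d + m) :=
  [ffun i => match split i with inl j => x j | inr j => a j end].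
Definition data_part d m (y : basis (d + m)) : basis d := [ffun j => y (lshift m j)].
Definition anc_part d m (y : basis (d + m)) : basis m := [ffun j => y (rshift d j)].
Definition zero_basis m : basis m := [ffun _ => false].

Definition implements_with_ancillas d m (U : op (d + m)) (G : op d) : Prop :=
  forall (x : basis d) (y : basis (d + m)),
    U y (join x (zero_basis m)) =
      if anc_part y == zero_basis m then G (data_part y) x else 0.

End Qcirc.

(* Attach one ancilla a_S to every subset S of the k+1 control qubits.  A cascade of
   CNOTs writes the parity x_S = XOR_{i in S} x_i into a_S; the layer applies Z^{2^{1-l}}
   to a_S for |S| odd and its inverse for |S| even; the same cascade, being an involution,
   then resets the ancillas.  With theta = pi 2^{1-l} the total phase is
   theta * sum_S (-1)^{|S|+1} x_S, and writing x_S = (1 - prod_{i in S} (-1)^{x_i}) / 2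
   this sum becomes (prod_i (1 - (-1)^{x_i}) - prod_i (1 - 1)) / 2, which is 2^k when all
   x_i = 1 and 0 otherwise.  The construction is exact for every k and l. *)

From HB Require Import structures.
From mathcomp Require Import all_boot all_order all_algebra.
From mathcomp Require Import reals trigo complex.
From mathcomp Require Import boolp ring.
Import Order.TTheory GRing.Theory Num.Theory.
Local Open Scope ring_scope.
Set Implicit Arguments. Unset Strict Implicit.

Section Expi.
Variable R : realType.

Lemma expi0 : expi (0 : R) = 1.
Proof. by rewrite /expi cos0 sin0. Qed.

Lemma expiD (a b : R) : expi (a + b) = expi a * expi b.
Proof. by rewrite /expi cosD sinD /=; congr Complex; ring. Qed.

Lemma expi_sum I (r : seq I) (P : pred I) (f : I -> R) :
  expi (\sum_(i <- r | P i) f i) = \prod_(i <- r | P i) expi (f i).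
Proof. exact: (big_morph _ expiD expi0). Qed.

Lemma expi_bool (b : bool) (t : R) : (if b then expi t else 1) = expi (t * b%:R).
Proof. by case: b; rewrite ?mulr1 ?mulr0 ?expi0. Qed.

End Expi.

Section AlternatingParity.
Variable F : numFieldType.

Lemma natr_bool_sign (b : bool) : (b%:R : F) = (1 - (-1) ^+ b) / 2.
Proof.
case: b; rewrite ?subrr ?mul0r // expr1 opprK -mulr2n divff //.
by rewrite pnatr_eq0.
Qed.

Lemma sign_big_addb I (r : seq I) (P : pred I) (x : I -> bool) :
  (-1) ^+ (\big[addb/false]_(i <- r | P i) x i) = \prod_(i <- r | P i) (-1) ^+ x i :> F.
Proof.
exact: (@big_morph _ _ (fun b : bool => (-1) ^+ b : F) 1 *%R false addb
          (@signr_addb F) (erefl _)).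
Qed.

Lemma sum_subsets_prod n (f : 'I_n -> F) :
  \sum_(S : {set 'I_n}) \prod_(i in S) f i = \prod_i (f i + 1).
Proof. by rewrite bigA_distr; apply: eq_bigr => S _; rewrite big_mkcond. Qed.

Lemma prod_one_sub_sign n (x : 'I_n -> bool) :
  \prod_i (1 - (-1) ^+ x i) = 2 ^+ n * [forall i, x i]%:R :> F.
Proof.
case: (boolP [forall i, x i]) => [/forallP x1 |]; last first.
  rewrite negb_forall => /existsP[i /negbTE xi0].
  by rewrite (bigD1 i) //= xi0 subrr mul0r mulr0.
rewrite mulr1 (eq_bigr (fun _ => 2)) ?prodr_const ?card_ord // => i _.
by rewrite x1 expr1 opprK.
Qed.

Lemma alternating_parity_sum n (x : 'I_n.+1 -> bool) :
  \sum_(S : {set 'I_n.+1}) (-1) ^+ #|S|.+1 * (\big[addb/false]_(i in S) x i)%:R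
    = 2 ^+ n * [forall i, x i]%:R :> F.
Proof.
have expand (S : {set 'I_n.+1}) : (-1) ^+ #|S|.+1 * (\big[addb/false]_(i in S) x i)%:R
    = (\prod_(i in S) (- (-1) ^+ x i) - \prod_(i in S) (-1)) / 2 :> F.
  by rewrite natr_bool_sign sign_big_addb prodrN prodr_const exprS; ring.
under eq_bigr => S _ do rewrite expand.
rewrite -mulr_suml sumrB !sum_subsets_prod addNr prodr_const card_ord expr0n subr0.
under eq_bigr => i _ do rewrite addrC.
by rewrite prod_one_sub_sign exprS -mulrA mulrC mulKf ?pnatr_eq0.
Qed.

End AlternatingParity.

Section MonomialOperators.
Variables (R : realType) (n : nat).
Local Notation mgate := ((basis n -> basis n) * (basis n -> R[i]))%type.

Definition monomial_op (g : mgate) : op R n := fun y x => (y == g.1 x)%:R * g.2 x.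

Fixpoint run_state (s : seq mgate) (x : basis n) : basis n :=
  if s is g :: s' then run_state s' (g.1 x) else x.

Fixpoint run_phase (s : seq mgate) (x : basis n) : R[i] :=
  if s is g :: s' then g.2 x * run_phase s' (g.1 x) else 1.

Lemma op_comp_monomial (A : op R n) g y x :
  op_comp A (monomial_op g) y x = A y (g.1 x) * g.2 x.
Proof.
rewrite /op_comp /monomial_op (bigD1 (g.1 x)) //= eqxx mul1r big1 ?addr0 //.
by move=> z /negbTE ->; rewrite mul0r mulr0.
Qed.

Lemma seq_op_monomial s y x :
  seq_op (map monomial_op s) y x = (y == run_state s x)%:R * run_phase s x.
Proof.
elim: s x => [|g s IH] x /=; first by rewrite /op_id mulr1.
by rewrite op_comp_monomial IH -mulrA [_ * g.2 x]mulrC.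
Qed.

Lemma run_state_cat s1 s2 x : run_state (s1 ++ s2) x = run_state s2 (run_state s1 x).
Proof. by elim: s1 x => /=. Qed.

Lemma run_phase_cat s1 s2 x :
  run_phase (s1 ++ s2) x = run_phase s1 x * run_phase s2 (run_state s1 x).
Proof. by elim: s1 x => [|g s IH] x /=; rewrite ?mul1r // IH mulrA. Qed.

End MonomialOperators.

Section CnotCascades.
Variable n : nat.
Implicit Types (s : seq ('I_n * 'I_n)) (z : basis n).

Definition cnot_map (p : 'I_n * 'I_n) z : basis n := if z p.1 then flip p.2 z else z.

Definition target_parity s z (q : 'I_n) : bool :=
  \big[addb/false]_(p <- s | p.2 == q) z p.1.

Definition cnot_cascade s z : basis n := [ffun q => z q (+) target_parity s z q].

Definition controls_untargeted s : Prop :=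
  forall p p', p \in s -> p' \in s -> p'.1 != p.2.

Lemma cnot_mapE p z q : cnot_map p z q = z q (+) (z p.1 && (p.2 == q)).
Proof.
by rewrite /cnot_map /flip; case: (z p.1); rewrite ?ffunE ?addbF // eq_sym addbC; case: eqP.
Qed.

Lemma eq_target_parity s z1 z2 q :
  {in s, forall p, z1 p.1 = z2 p.1} -> target_parity s z1 q = target_parity s z2 q.
Proof.
move=> eq_z; rewrite /target_parity big_seq_cond [RHS]big_seq_cond.
by apply: eq_bigr => p /andP[/eq_z].
Qed.

Lemma target_parity_control s z p :
  controls_untargeted s -> p \in s -> target_parity s z p.1 = false.
Proof.
move=> ctl sp; rewrite /target_parity big1_seq // => p' /andP[/eqP p'p sp'].
by move: (ctl p' p sp' sp); rewrite p'p eqxx.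
Qed.

Lemma cnot_cascade_cons p s z :
  controls_untargeted (p :: s) -> cnot_cascade s (cnot_map p z) = cnot_cascade (p :: s) z.
Proof.
move=> ctl; apply/ffunP => q; rewrite !ffunE cnot_mapE /target_parity big_cons.
rewrite -/(target_parity s _ q) -/(target_parity s z q) (@eq_target_parity s _ z).
  by case: (p.2 == q); rewrite ?andbT ?andbF ?addbF ?addbA.
move=> p' sp'; rewrite cnot_mapE.
by rewrite eq_sym (negbTE (ctl p p' (mem_head _ _) _)) ?andbF ?addbF // inE sp' orbT.
Qed.

Lemma cnot_cascade_involutive s : controls_untargeted s -> involutive (cnot_cascade s).
Proof.
move=> ctl z; apply/ffunP => q; rewrite !ffunE.
rewrite (@eq_target_parity s _ z) => [|p sp]; last first.
  by rewrite ffunE target_parity_control // addbF.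
by rewrite -addbA addbb addbF.
Qed.

End CnotCascades.

Section Circuits.
Variables (R : realType) (n : nat).
Implicit Types (s : seq ('I_n * 'I_n)) (layer : seq ('I_n * bool)) (z : basis n).

Definition cnot_mgate (p : 'I_n * 'I_n) := (cnot_map p, fun _ : basis n => 1 : R[i]).

Definition layer_angle (l : nat) (g : 'I_n * bool) : R :=
  if g.2 then - zl_phase R l else zl_phase R l.

Definition layer_mgate l (g : 'I_n * bool) :=
  (@id (basis n), fun z : basis n => expi (layer_angle l g * (z g.1)%:R)).

Lemma cnot_op_monomial p : cnot_op R p.1 p.2 = monomial_op (cnot_mgate p).
Proof. by apply/funext => y; apply/funext => x; rewrite /monomial_op mulr1. Qed.

Lemma layer_gate_monomial l g : layer_gate R l g = monomial_op (layer_mgate l g).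
Proof. by apply/funext => y; apply/funext => x; rewrite /monomial_op /= -expi_bool. Qed.

Lemma run_state_cnots s z :
  controls_untargeted s -> run_state [seq cnot_mgate p | p <- s] z = cnot_cascade s z.
Proof.
elim: s z => [|p s IH] z ctl /=.
  by apply/ffunP => q; rewrite ffunE /target_parity big_nil addbF.
rewrite IH ?cnot_cascade_cons // => a b sa sb.
by apply: ctl; rewrite inE ?sa ?sb orbT.
Qed.

Lemma run_phase_cnots s z : run_phase [seq cnot_mgate p | p <- s] z = 1.
Proof. by elim: s z => //= p s IH z; rewrite IH mul1r. Qed.

Lemma run_state_layer l layer z : run_state [seq layer_mgate l g | g <- layer] z = z.
Proof. by elim: layer. Qed.

Lemma run_phase_layer l layer z :
  run_phase [seq layer_mgate l g | g <- layer] z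
    = expi (\sum_(g <- layer) layer_angle l g * (z g.1)%:R).
Proof.
rewrite expi_sum; elim: layer => [|g layer IH] /=; first by rewrite big_nil.
by rewrite big_cons IH.
Qed.

Lemma circuit_op_uncompute l pre layer y x : controls_untargeted pre ->
  circuit_op R l pre layer pre y x
    = (y == x)%:R * expi (\sum_(g <- layer) layer_angle l g * (cnot_cascade pre x g.1)%:R).
Proof.
move=> ctl; have -> : circuit_op R l pre layer pre = seq_op (map (@monomial_op R n)
    ([seq cnot_mgate p | p <- pre] ++ [seq layer_mgate l g | g <- layer]
       ++ [seq cnot_mgate p | p <- pre])).
  rewrite /circuit_op !map_cat -!map_comp.
  by congr (seq_op (_ ++ _ ++ _)); apply: eq_map => g /=;
    rewrite ?cnot_op_monomial ?layer_gate_monomial.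
rewrite seq_op_monomial !run_state_cat !run_phase_cat run_state_layer.
rewrite !run_state_cnots // cnot_cascade_involutive //.
by rewrite !run_phase_cnots run_phase_layer mul1r mulr1.
Qed.

End Circuits.

Section Ancillas.
Variables d m : nat.
Implicit Types (x : basis d) (a : basis m).

Lemma join_lshift x a i : join x a (lshift m i) = x i.
Proof. by rewrite /join ffunE (unsplitK (inl i : 'I_d + 'I_m)). Qed.

Lemma join_rshift x a j : join x a (rshift d j) = a j.
Proof. by rewrite /join ffunE (unsplitK (inr j : 'I_d + 'I_m)). Qed.

Lemma eq_join (y : basis (d + m)) x a :
  (y == join x a) = (data_part y == x) && (anc_part y == a).
Proof.
apply/eqP/andP => [->|[/eqP <- /eqP <-]].
  by split; apply/eqP/ffunP => i; rewrite ffunE ?join_lshift ?join_rshift.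
apply/ffunP => q; rewrite -(splitK q); case: (split q) => j /=.
  by rewrite join_lshift ffunE.
by rewrite join_rshift ffunE.
Qed.

End Ancillas.

Section SubsetParityCircuit.
Variable k : nat.
Local Notation T := {set 'I_k.+1}.
Local Notation m := #|{: T}|.
Local Notation N := (k.+1 + m)%N.

Definition data_qubit (i : 'I_k.+1) : 'I_N := lshift m i.
Definition ancilla (A : T) : 'I_N := rshift k.+1 (enum_rank A).

Definition parity_cnots : seq ('I_N * 'I_N) :=
  flatten [seq [seq (data_qubit i, ancilla A) | i <- enum A] | A <- enum T].

Definition parity_layer : seq ('I_N * bool) :=
  [seq (ancilla A, ~~ odd #|A|) | A <- enum T].

Lemma eq_ancilla A B : (ancilla A == ancilla B) = (A == B).
Proof. by rewrite /ancilla eq_rshift (inj_eq enum_rank_inj). Qed.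

Lemma mem_parity_cnots p :
  p \in parity_cnots -> exists i A, p = (data_qubit i, ancilla A).
Proof. by case/flattenP => _ /mapP[A _ ->] /mapP[i _ ->]; exists i, A. Qed.

Lemma parity_cnots_wf : wf_cnots parity_cnots.
Proof.
by apply/allP => p /mem_parity_cnots[i [A ->]]; rewrite /= /data_qubit /ancilla eq_lrshift.
Qed.

Lemma parity_cnots_untargeted : controls_untargeted parity_cnots.
Proof.
move=> p p' /mem_parity_cnots[i [A ->]] /mem_parity_cnots[i' [B ->]].
by rewrite /= /data_qubit /ancilla eq_lrshift.
Qed.

Lemma uniq_parity_layer : uniq [seq g.1 | g <- parity_layer].
Proof.
rewrite -map_comp map_inj_uniq ?enum_uniq // => A B /eqP.
by rewrite eq_ancilla => /eqP.
Qed.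

Lemma target_parity_ancilla (z : basis N) A :
  target_parity parity_cnots z (ancilla A) = \big[addb/false]_(i in A) z (data_qubit i).
Proof.
rewrite /target_parity big_flatten big_map big_enum (bigD1 A) //=.
rewrite [X in _ (+) X]big1 ?addbF => [|B BA]; last first.
  by rewrite big_map big_pred0 // => i; rewrite /= eq_ancilla (negbTE BA).
by rewrite big_map (eq_bigl xpredT) ?big_enum // => i; rewrite /= eqxx.
Qed.

Lemma cnot_cascade_ancilla (x : basis k.+1) A :
  cnot_cascade parity_cnots (join x (zero_basis m)) (ancilla A)
    = \big[addb/false]_(i in A) x i.
Proof.
rewrite ffunE target_parity_ancilla /ancilla join_rshift ffunE /=.
by apply: eq_bigr => i _; rewrite join_lshift.
Qed.

Lemma parity_layer_angle (R : realType) l (x : basis k.+1) :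
  \sum_(g <- parity_layer) layer_angle R l g
      * (cnot_cascade parity_cnots (join x (zero_basis m)) g.1)%:R
    = pi * (2 ^+ k.+1 / 2 ^+ l) * [forall i, x i]%:R.
Proof.
have signed_angle (A : T) (c : R) :
    (if ~~ odd #|A| then - zl_phase R l else zl_phase R l) * c
      = zl_phase R l * ((-1) ^+ #|A|.+1 * c).
  by rewrite exprS -signr_odd; case: (odd _); rewrite /= ?expr0 ?expr1; ring.
rewrite big_map big_enum /= (eq_bigl xpredT) => [|A]; last by rewrite inE.
under eq_bigr => A _ do rewrite /layer_angle /= cnot_cascade_ancilla signed_angle.
by rewrite -mulr_sumr alternating_parity_sum /zl_phase exprS; ring.
Qed.

End SubsetParityCircuit.

Unset Implicit Arguments.

Theorem theorem4 (R : realType) (l k : nat) :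
  (1 <= l)%N -> (k <= l - 1)%N ->
  exists (m : nat) (pre : seq ('I_(k.+1 + m) * 'I_(k.+1 + m)))
         (layer : seq ('I_(k.+1 + m) * bool)) (post : seq ('I_(k.+1 + m) * 'I_(k.+1 + m))),
    [/\ wf_cnots pre, wf_cnots post, uniq [seq g.1 | g <- layer] &
      implements_with_ancillas (@circuit_op R _ l pre layer post) (@ckz_op R k l)].
Proof.
move=> _ _; exists #|{: {set 'I_k.+1}}|, (parity_cnots k), (parity_layer k), (parity_cnots k).
split; [exact: parity_cnots_wf | exact: parity_cnots_wf | exact: uniq_parity_layer |].
move=> x y; rewrite circuit_op_uncompute; last exact: parity_cnots_untargeted.
rewrite parity_layer_angle eq_join /ckz_op expi_bool.
by case: (anc_part y == _); rewrite ?andbF ?andbT ?mul0r.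
Qed.
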